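(* The subspace $K[I[\infty]]$ of $K[\mathcal{T}[\infty]]$ spanned by increasing trees is a graded Hopf subalgebra of $(K[\mathcal{T}[\infty]],\star,\Delta_{\mathrm s})$: it contains the unit, is closed under $\star$, and $\Delta_{\mathrm s}(K[I[\infty]])\subseteq K[I[\infty]]\otimes K[I[\infty]]$.
   Context: $K$ is a field. A tree is a finite planar rooted tree, degree = number of non-root nodes, $\odot$ the one-node tree. An $n$--tree is a tree of degree $n$ whose non-root nodes are labelled bijectively by $\{1,\dots,n\}$; $\mathcal{T}[\infty]$ is the set of all $n$--trees. An increasing tree is an $n$--tree in which labels strictly increase along every path starting at the root; $I[\infty]$ is the set of increasing trees. Nodes $N(t)$ are ordered by depth-first post-order (subtrees left to right recursively, then the node; root maximal); write $u_1<\dots<u_n$ for non-root nodes. For a set $A$ of non-root nodes, $t_A$ is obtained by deleting non-root nodes outside $A$ (children attached in order to the parent in place of the deleted node), labels kept; $t_{[i,j]}=t_{\{u_h,\dots,u_k\}}$ if $i\le j$ and $[i,j]\cap[n]=[h,k]\ne\emptyset$, else $\odot$. Standardization $\mathrm s(t)$ of an $\mathbb N$-labelled tree with distinct labels relabels by $1,\dots,|t|$ preserving relative order. $\Delta_{\mathrm s}(t)=\sum_{k=0}^n\mathrm s(t_{[1,k]})\otimes\mathrm s(t_{[k+1,n]})$. $w[m]$ adds $m$ to every label. A partition of $u$ of degree $n\ge1$ is an ordered tuple $(u_{[n_0+1,n_1]},\dots,u_{[n_{k-1}+1,n_k]})$, $0=n_0<\dots<n_k=n$; for $P=(u_1,\dots,u_k)$,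 $I(P,t)$ is the set of maps $f$ from blocks to $N(t)$ with $f(u_1)<\dots<f(u_k)$; $t\#_{P,f}u$ identifies the root of each $u_i$ with $f(u_i)$, the root-children of $u_i$ becoming children of $f(u_i)$ to the right of its original children, labels kept; $t* u=\sum_{P,f}t\#_{P,f}u$ ($|u|\ge1$), $t*\odot=t$; $t\star w=t* w[|t|]$. *)

From HB Require Import structures.
From mathcomp Require Import all_boot all_order all_algebra.
Set Implicit Arguments. Unset Strict Implicit. Unset Printing Implicit Defensive.
Import GRing.Theory.
Local Open Scope ring_scope.

(* A tree (with its unlabelled root) is represented by the ordered forest   *)
(* [ptree := seq ltree] of the root's children; the one-node tree is [::].  *)
Inductive ltree := LNode of nat & seq ltree.

Fixpoint ltree_enc (t : ltree) : GenTree.tree nat :=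
  let: LNode l ts := t in GenTree.Node l (map ltree_enc ts).
Fixpoint ltree_dec (g : GenTree.tree nat) : ltree :=
  match g with
  | GenTree.Leaf _ => LNode 0 [::]
  | GenTree.Node l gs => LNode l (map ltree_dec gs)
  end.
Fixpoint ltree_encK (t : ltree) : ltree_dec (ltree_enc t) = t :=
  match t return ltree_dec (ltree_enc t) = t with
  | LNode l ts =>
      f_equal (LNode l)
        ((fix F (s : seq ltree) : map ltree_dec (map ltree_enc s) = s :=
            match s return map ltree_dec (map ltree_enc s) = s with
            | [::] => erefl
            | t1 :: s1 => f_equal2 cons (ltree_encK t1) (F s1)
            end) ts)
  end.
HB.instance Definition _ := Equality.copy ltree (can_type ltree_encK).

Definition ptree := seq ltree.

Fixpoint post (t : ltree) : seq nat :=
  let: LNode l ts := t in flatten (map post ts) ++ [:: l].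
(* labels of the non-root nodes u_1 < ... < u_n in post-order *)
Definition labels (t : ptree) : seq nat := flatten (map post t).
Definition degree (t : ptree) : nat := size (labels t).

Definition is_ntree (t : ptree) : bool := perm_eq (labels t) (iota 1 (degree t)).

Definition label (t : ltree) : nat := let: LNode l _ := t in l.
(* labels strictly increase along every edge (hence along every path from  *)
(* the root; the root is unlabelled)                                        *)
Fixpoint incr_node (t : ltree) : bool :=
  let: LNode l ts := t in all (fun c => l < label c)%N ts && all incr_node ts.
Definition is_increasing (t : ptree) : bool := is_ntree t && all incr_node t.

Fixpoint relab (g : nat -> nat) (t : ltree) : ltree :=
  let: LNode l ts := t in LNode (g l) (map (relab g) ts).
Definition prelab (g : nat -> nat) (t : ptree) : ptree := map (relab g) t.

Definition shift (m : nat) (t : ptree) : ptree := prelab (addn m) t.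

Definition std (t : ptree) : ptree :=
  prelab (fun l => count (fun m => m <= l)%N (labels t)) t.

Fixpoint restr_node (A : pred nat) (t : ltree) : seq ltree :=
  let: LNode l ts := t in
  let fs := flatten (map (restr_node A) ts) in
  if A l then [:: LNode l fs] else fs.
Definition restr (A : pred nat) (t : ptree) : ptree :=
  flatten (map (restr_node A) t).

(* t_[i,j]: keep the nodes u_p with i <= p <= j (p = post-order position, *)
(* 1-based); labels of an n-tree are distinct so nodes are determined by  *)
(* their labels. Empty intersection (or i > j) gives the one-node tree.   *)
Definition interval (t : ptree) (i j : nat) : ptree :=
  restr (fun l => (i <= (index l (labels t)).+1 <= j)%N) t.

(* grafting: g gives, for each node (by label), the forest to be appended *)
(* to the right of its children; groot for the root.                       *)
Fixpoint graft_node (g : nat -> seq ltree) (t : ltree) : ltree :=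
  let: LNode l ts := t in LNode l (map (graft_node g) ts ++ g l).
Definition graft (g : nat -> seq ltree) (groot : seq ltree) (t : ptree) : ptree :=
  map (graft_node g) t ++ groot.

Fixpoint ksub (s : seq nat) (k : nat) : seq (seq nat) :=
  match s with
  | [::] => if k is 0 then [:: [::]] else [::]
  | x :: s' => if k is k'.+1 then map (cons x) (ksub s' k') ++ ksub s' k
               else [:: [::]]
  end.
Definition subsets (s : seq nat) : seq (seq nat) :=
  flatten [seq ksub s j | j <- iota 0 (size s).+1].

(* The blocks of the partition of u with cut points C (sorted subset of   *)
(* {1,..,n-1}): boundaries 0 = n_0 < n_1 < ... < n_k = n.                *)
Definition blocks (u : ptree) (C : seq nat) : seq ptree :=
  let bs := 0%N :: rcons C (degree u) in
  [seq interval u p.1.+1 p.2 | p <- zip bs (behead bs)].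

(* t #_{P,f} u, with f given by the increasing list F of post-order        *)
(* positions (0-based; the root has position degree t) of nodes of t.      *)
Definition graft_blocks (t : ptree) (bl : seq ptree) (F : seq nat) : ptree :=
  let at_pos p := if p \in F then nth [::] bl (index p F) else [::] in
  graft (fun l => at_pos (index l (labels t))) (at_pos (degree t)) t.

(* t * u as a list of trees (the formal sum, multiplicities included) *)
Definition grafts (t u : ptree) : seq ptree :=
  if degree u == 0%N then [:: t] else
  flatten [seq [seq graft_blocks t (blocks u C) F
               | F <- ksub (iota 0 (degree t).+1) (size C).+1]
          | C <- subsets (iota 1 (degree u).-1)].

Definition star_trees (t w : ptree) : seq ptree := grafts t (shift (degree t) w).

Definition coprod_tree (t : ptree) : seq (ptree * ptree) :=
  [seq (std (interval t 1 k), std (interval t k.+1 (degree t)))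
  | k <- iota 0 (degree t).+1].

(* K[T[oo]]: finite formal K-linear combinations of trees, represented by   *)
(* lists of (coefficient, tree); K[T]⊗K[T] has basis the pairs of trees.   *)
Section Linear.
Variable K : fieldType.

Definition fsum (T : eqType) := seq (K * T).
Definition coef (T : eqType) (x : fsum T) (t : T) : K :=
  \sum_(p <- x | p.2 == t) p.1.

Definition star (x y : fsum ptree) : fsum ptree :=
  flatten [seq [seq (a.1 * b.1, s) | s <- star_trees a.2 b.2] | a <- x, b <- y].
Definition coprod (x : fsum ptree) : fsum (ptree * ptree)%type :=
  [seq (a.1, p) | a <- x, p <- coprod_tree a.2].

Definition unit_elt : fsum ptree := [:: (1, [::])].

Definition inKI (x : fsum ptree) : Prop :=
  forall t, coef x t != 0 -> is_increasing t.
Definition inKI2 (x : fsum (ptree * ptree)%type) : Prop :=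
  forall p, coef x p != 0 -> is_increasing p.1 /\ is_increasing p.2.
End Linear.

(* A tree is increasing iff labels strictly increase along every edge, so it suffices to
   check that the operations preserve this local condition and the labelling by 1..n.
   Deleting nodes preserves it, since the new parent of a surviving node is one of its old
   ancestors, and standardization relabels by an order-preserving map; this handles each
   tensor s(t_[1,k]) ⊗ s(t_[k+1,n]).  In t ⋆ w every block grafted onto t is a
   restriction of w[|t|], hence increasing, and carries labels above |t|, i.e. above every
   label of t; the blocks partition the labels of w[|t|], so the graft is a
   (|t|+|w|)-tree.  Linearity finishes the proof: a tree with a nonzero coefficient in
   x ⋆ y (or Δ_s x) occurs in the product (or coproduct) of basis trees with nonzero
   coefficients in x and y. *)

From Pilot Require Import Defs.
From HB Require Import structures.
From mathcomp Require Import all_boot all_order all_algebra.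
From mathcomp Require Import zify.
Set Implicit Arguments. Unset Strict Implicit. Unset Printing Implicit Defensive.

Lemma ltree_ind_mem (P : ltree -> Prop) :
  (forall l ts, {in ts, forall c, P c} -> P (LNode l ts)) -> forall t, P t.
Proof.
move=> IH; fix F 1 => -[l ts]; apply: IH.
(* [done] would close the nil case with an unguarded call to [F]. *)
elim: ts => [d|c ts IHts d]; first by rewrite in_nil => nil_d; discriminate nil_d.
rewrite in_cons => /orP[/eqP->|]; [exact: F | exact: IHts].
Qed.

Lemma post_node l ts : post (LNode l ts) = labels ts ++ [:: l].
Proof. by []. Qed.

Lemma labels_cons c t : labels (c :: t) = post c ++ labels t.
Proof. by []. Qed.

Lemma labels_cat t1 t2 : labels (t1 ++ t2) = labels t1 ++ labels t2.
Proof. by rewrite /labels map_cat flatten_cat. Qed.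

Lemma labels_flatten (ts : seq ptree) :
  labels (flatten ts) = flatten (map labels ts).
Proof. by elim: ts => //= t ts IH; rewrite labels_cat IH. Qed.

Lemma labelsP x t : reflect (exists2 c, c \in t & x \in post c) (x \in labels t).
Proof.
apply: (iffP flattenP) => [[_ /mapP[c ct ->] xc]|[c ct xc]]; first by exists c.
by exists (post c); rewrite ?map_f.
Qed.

Lemma label_in_post c : label c \in post c.
Proof. by case: c => l ts; rewrite post_node mem_cat mem_seq1 eqxx orbT. Qed.

Lemma label_in_labels c t : c \in t -> label c \in labels t.
Proof. by move=> ct; apply/labelsP; exists c; rewrite ?label_in_post. Qed.

Lemma post_sub_node l ts c : c \in ts -> {subset post c <= post (LNode l ts)}.
Proof. by move=> cts x xc; rewrite post_node mem_cat; apply/orP; left; apply/labelsP; exists c. Qed.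

Lemma label_relab g c : label (relab g c) = g (label c).
Proof. by case: c. Qed.

Lemma post_relab g c : post (relab g c) = map g (post c).
Proof.
elim/ltree_ind_mem: c => l ts IH; rewrite /= map_cat; congr (_ ++ _).
elim: ts IH => //= c ts IHts IH; rewrite map_cat IH ?mem_head // IHts // => d dts.
by rewrite IH // in_cons dts orbT.
Qed.

Lemma labels_prelab g t : labels (prelab g t) = map g (labels t).
Proof. by elim: t => //= c t IH; rewrite labels_cons IH post_relab map_cat. Qed.

Lemma labels_restr_in A t :
  {in t, forall c, labels (restr_node A c) = filter A (post c)} ->
  labels (restr A t) = filter A (labels t).
Proof.
rewrite /restr labels_flatten; elim: t => //= c t IH restr_c.
rewrite labels_cons filter_cat restr_c ?mem_head // IH // => d dt.
by rewrite restr_c // in_cons dt orbT.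
Qed.

Lemma labels_restr_node A c : labels (restr_node A c) = filter A (post c).
Proof.
elim/ltree_ind_mem: c => l ts /labels_restr_in IH /=.
by rewrite filter_cat /=; case: (A l); rewrite ?labels_cons ?cats0 -IH.
Qed.

Lemma labels_restr A t : labels (restr A t) = filter A (labels t).
Proof. by apply: labels_restr_in => c _; apply: labels_restr_node. Qed.

Lemma perm_labels_graft_in g t :
  {in t, forall c, perm_eq (post (graft_node g c))
                          (post c ++ flatten [seq labels (g l) | l <- post c])} ->
  perm_eq (labels (map (graft_node g) t))
          (labels t ++ flatten [seq labels (g l) | l <- labels t]).
Proof.
elim: t => //= c t IH graft_c; rewrite labels_cons map_cat flatten_cat.
apply: perm_trans (perm_cat (graft_c c (mem_head _ _)) (IH _)) _; last first.
  by rewrite -!catA perm_cat2l perm_catCA.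
by move=> d dt; rewrite graft_c // in_cons dt orbT.
Qed.

Lemma perm_labels_graft_node g c :
  perm_eq (post (graft_node g c)) (post c ++ flatten [seq labels (g l) | l <- post c]).
Proof.
elim/ltree_ind_mem: c => l ts /perm_labels_graft_in graft_ts.
change (perm_eq (labels (map (graft_node g) ts ++ g l) ++ [:: l])
  ((labels ts ++ [:: l]) ++ flatten [seq labels (g x) | x <- labels ts ++ [:: l]])).
rewrite labels_cat map_cat flatten_cat /= cats0 -!catA.
apply: perm_trans (perm_cat graft_ts (perm_refl _)) _.
by rewrite -catA perm_cat2l perm_sym perm_catC -catA.
Qed.

Lemma perm_labels_graft g groot t :
  perm_eq (labels (graft g groot t))
          (labels t ++ flatten [seq labels (g l) | l <- labels t] ++ labels groot).
Proof.
rewrite /graft labels_cat catA perm_cat2r.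
by apply: perm_labels_graft_in => c _; apply: perm_labels_graft_node.
Qed.

Lemma incr_post_ge c : incr_node c -> {in post c, forall x, label c <= x}.
Proof.
elim/ltree_ind_mem: c => l ts IH /= /andP[/allP lt_kids /allP incr_kids] x.
rewrite mem_cat mem_seq1 => /orP[/labelsP[d dts xd]|/eqP-> //].
by apply: ltnW (leq_trans (lt_kids d dts) (IH d dts (incr_kids d dts) x xd)).
Qed.

Lemma incr_restr_node A c : incr_node c -> all incr_node (restr_node A c).
Proof.
elim/ltree_ind_mem: c => l ts IH incr_c.
have /andP[/allP lt_kids /allP incr_kids] := incr_c.
have incr_fs : all incr_node (restr A ts).
  by apply/allP => d /flattenP[_ /mapP[c cts ->]]; apply/allP/IH/incr_kids.
rewrite /=; case: (A l) => //=; rewrite incr_fs !andbT.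
apply/allP => d /label_in_labels; rewrite labels_restr mem_filter => /andP[_].
case/labelsP => c cts /(incr_post_ge (incr_kids c cts)).
exact: leq_trans (lt_kids c cts).
Qed.

Lemma incr_restr A t : all incr_node t -> all incr_node (restr A t).
Proof.
move=> /allP incr_t; apply/allP => d /flattenP[_ /mapP[c ct ->]].
exact/allP/incr_restr_node/incr_t.
Qed.

Lemma incr_relab g c : {in post c &, {homo g : x y / x < y}} ->
  incr_node c -> incr_node (relab g c).
Proof.
elim/ltree_ind_mem: c => l ts IH g_mono /= /andP[/allP lt_kids /allP incr_kids].
apply/andP; split; apply/allP => _ /mapP[d dts ->].
  rewrite label_relab; apply: g_mono (lt_kids d dts); first exact: (label_in_post (LNode l ts)).
  by have /(post_sub_node l dts) := label_in_post d.
apply: IH => //; last exact: incr_kids.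
by move=> x y /(post_sub_node l dts) xc /(post_sub_node l dts) yc; apply: g_mono.
Qed.

Lemma incr_graft_node g c :
  {in post c, forall l, all (fun d => l < label d) (g l) && all incr_node (g l)} ->
  incr_node c -> incr_node (graft_node g c).
Proof.
elim/ltree_ind_mem: c => l ts IH g_ok /= /andP[/allP lt_kids /allP incr_kids].
have /andP[lt_g incr_g] : all (fun d => l < label d) (g l) && all incr_node (g l).
  exact: g_ok (label_in_post (LNode l ts)).
rewrite !all_cat lt_g incr_g !andbT; apply/andP; split; apply/allP => _ /mapP[d dts ->].
  by case: d dts => l' ts' /lt_kids.
apply: IH => //; last exact: incr_kids.
by move=> x /(post_sub_node l dts); apply: g_ok.
Qed.

Definition rank (s : seq nat) (x : nat) : nat := count (fun m => m <= x) s.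

Lemma rank_ltn s x y : x < y -> y \in s -> rank s x < rank s y.
Proof.
rewrite /rank; elim: s => //= z s IH xy; rewrite in_cons => /orP[/eqP<-|ys].
  rewrite leqnn (leqNgt y x) xy /= add1n ltnS; apply: sub_count => m /= mx.
  exact: leq_trans mx (ltnW xy).
have := IH xy ys; case: (leqP z x) => [zx|_]; last lia.
by rewrite (leq_trans zx (ltnW xy)); lia.
Qed.

Lemma perm_rank_iota s : uniq s -> perm_eq (map (rank s) s) (iota 1 (size s)).
Proof.
move=> us; have rank_inj : {in s &, injective (rank s)}.
  move=> x y xs ys Exy; apply/eqP; case: ltngtP => // [xy|yx].
    by have := rank_ltn xy ys; rewrite Exy ltnn.
  by have := rank_ltn yx xs; rewrite Exy ltnn.
have rank_range : {subset map (rank s) s <= iota 1 (size s)}.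
  move=> _ /mapP[x xs ->]; rewrite mem_iota add1n ltnS count_size andbT.
  by rewrite /rank -has_count; apply/hasP; exists x.
have u_ranks : uniq (map (rank s) s) by rewrite map_inj_in_uniq.
have size_ranks : size (iota 1 (size s)) <= size (map (rank s) s).
  by rewrite size_iota size_map.
have [_ eq_ranks] := uniq_min_size u_ranks rank_range size_ranks.
by rewrite uniq_perm ?iota_uniq.
Qed.

Lemma std_increasing t : uniq (labels t) -> all incr_node t -> is_increasing (std t).
Proof.
move=> ut incr_t; rewrite /is_increasing /is_ntree /degree labels_prelab size_map.
rewrite perm_rank_iota //=; apply/allP => _ /mapP[c ct ->].
apply: incr_relab (allP incr_t c ct) => x y _ yc xy.
by apply: rank_ltn xy _; apply/labelsP; exists c.
Qed.

Lemma coprod_tree_increasing t p : is_increasing t -> p \in coprod_tree t ->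
  is_increasing p.1 /\ is_increasing p.2.
Proof.
move=> /andP[nt incr_t] /mapP[k _ ->] /=.
have ut : uniq (labels t) by rewrite (perm_uniq nt) iota_uniq.
by split; apply: std_increasing; rewrite ?labels_restr ?filter_uniq ?incr_restr.
Qed.

Lemma map_index_uniq (T : eqType) (s : seq T) :
  uniq s -> map (index^~ s) s = iota 0 (size s).
Proof.
move=> us; case: s us => // x0 s us.
rewrite -{2}(mkseq_nth x0 (x0 :: s)) /mkseq -map_comp -[RHS]map_id.
by apply/eq_in_map => i; rewrite mem_iota add0n => /andP[_ lt_i]; apply: index_uniq.
Qed.

Lemma mem_ksub s k c : c \in ksub s k -> subseq c s /\ size c = k.
Proof.
elim: s k c => [|x s IH] [|k] c /=; rewrite ?mem_seq1 ?in_nil //; try by move/eqP->.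
rewrite mem_cat => /orP[/mapP[c' /IH[sub_c' <-] ->]|/IH[sub_c <-]].
  by rewrite /= eqxx sub_c'.
by split=> //; apply: subseq_trans sub_c (subseq_cons _ _).
Qed.

Lemma mem_subsets s c : c \in subsets s -> subseq c s.
Proof. by move=> /flattenP[_ /mapP[j _ ->] /mem_ksub[]]. Qed.

Definition block_at (bl : seq ptree) (F : seq nat) (p : nat) : ptree :=
  if p \in F then nth [::] bl (index p F) else [::].

Lemma graft_blocksE t bl F : graft_blocks t bl F =
  graft (fun l => block_at bl F (index l (labels t))) (block_at bl F (degree t)) t.
Proof. by []. Qed.

Lemma flatten_labels_block_at s F bl : uniq s -> subseq F s -> size bl = size F ->
  flatten [seq labels (block_at bl F p) | p <- s] = flatten (map labels bl).
Proof.
elim: s F bl => [|x s IH] F bl; first by move=> _ /eqP-> /=; case: bl.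
move=> /= /andP[xs us]; case: F => [|y F] /=.
  by move=> _; case: bl => //= _; rewrite (IH [::] [::]) ?sub0seq.
case: eqP => [->|_] sub_F size_bl; last first.
  have xF : x \in y :: F = false by apply/negbTE; apply: contra xs => /(mem_subseq sub_F).
  by rewrite {1}/block_at xF /= (IH (y :: F) bl).
case: bl size_bl => //= b bl [size_bl]; rewrite {1}/block_at mem_head /= eqxx -(IH F bl) //.
congr (_ ++ flatten _); apply/eq_in_map => p ps; have xp : x != p by apply: contraNneq xs => ->.
by rewrite /block_at in_cons eq_sym (negPf xp) /= (negPf xp).
Qed.

Lemma sum_consecutive_intervals q x r : path leq x r ->
  \sum_(pr <- zip (x :: r) r) (pr.1 <= q < pr.2 : nat) = (x <= q < last x r).
Proof.
elim: r x => [|y r IH] x /=; first by rewrite big_nil; case: leqP => // /leq_gtF ->.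
move=> /andP[xy yr]; rewrite big_cons IH //=.
have : y <= last y r.
  by have := mem_last y r; rewrite in_cons => /orP[/eqP-> //|/(allP (order_path_min leq_trans yr))].
lia.
Qed.

Lemma sum_count_partition (X : Type) (prs : seq X) (Q : X -> pred nat) (P : pred nat) s :
  {in s, forall x, \sum_(pr <- prs) (Q pr x : nat) = 1} ->
  \sum_(pr <- prs) count (predI P (Q pr)) s = count P s.
Proof.
elim: s => [|x s IH] Q1 /=; first by rewrite big1.
rewrite big_split /= IH => [|y ys]; last by rewrite Q1 // in_cons ys orbT.
by congr (_ + _); case: (P x); rewrite /= ?Q1 ?mem_head ?big1.
Qed.

Lemma perm_flatten_blocks u C : subseq C (iota 1 (degree u).-1) ->
  perm_eq (flatten (map labels (blocks u C))) (labels u).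
Proof.
move=> sub_C.
have C_sorted : sorted leq C by apply: subseq_sorted sub_C (iota_sorted _ _); apply: leq_trans.
have C_le : {in C, forall c, c <= degree u}.
  by move=> c /(mem_subseq sub_C); rewrite mem_iota; lia.
have bounds_sorted : path leq 0 (rcons C (degree u)).
  rewrite rcons_path; apply/andP; split; first by case: C C_sorted {sub_C C_le}.
  by have := mem_last 0 C; rewrite in_cons => /orP[/eqP->|/C_le].
apply/permP => P; rewrite count_flatten /blocks -map_comp sumnE !big_map.
under eq_bigr => pr _ do rewrite /= /Defs.interval labels_restr count_filter.
apply: sum_count_partition => x xu; under eq_bigr => pr _ do rewrite ltnS.
by rewrite sum_consecutive_intervals // last_rcons /= index_mem xu.
Qed.

Lemma incr_blocks u C : all incr_node u -> {in blocks u C, forall b, all incr_node b}.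
Proof. by move=> incr_u _ /mapP[pr _ ->]; apply: incr_restr. Qed.

Lemma labels_blocks_sub u C : {in blocks u C, forall b, {subset labels b <= labels u}}.
Proof. by move=> _ /mapP[pr _ ->] x; rewrite /Defs.interval labels_restr mem_filter => /andP[]. Qed.

Lemma size_blocks u C : size (blocks u C) = (size C).+1.
Proof. by rewrite size_map size_zip /= size_rcons; lia. Qed.

Lemma labels_shift n w : labels (shift n w) = map (addn n) (labels w).
Proof. exact: labels_prelab. Qed.

Lemma incr_shift n w : all incr_node w -> all incr_node (shift n w).
Proof.
move=> /allP incr_w; apply/allP => _ /mapP[c cw ->].
by apply: incr_relab (incr_w c cw) => x y _ _; rewrite ltn_add2l.
Qed.

Lemma perm_labels_graft_blocks t bl F :
  uniq (labels t) -> subseq F (iota 0 (degree t).+1) -> size bl = size F ->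
  perm_eq (labels (graft_blocks t bl F)) (labels t ++ flatten (map labels bl)).
Proof.
move=> ut sub_F size_bl; rewrite graft_blocksE.
apply: perm_trans (perm_labels_graft _ _ _) _; rewrite perm_cat2l.
have -> : [seq labels (block_at bl F (index l (labels t))) | l <- labels t]
        = [seq labels (block_at bl F p) | p <- iota 0 (degree t)].
  by rewrite -(map_index_uniq ut) -map_comp.
rewrite -(flatten_labels_block_at (iota_uniq 0 _) sub_F size_bl).
by rewrite -addn1 iotaD map_cat flatten_cat /= cats0.
Qed.

Lemma incr_graft_blocks n t bl F :
  all incr_node t -> {in labels t, forall l, l <= n} ->
  {in bl, forall b, all incr_node b && all (fun x => n < x) (labels b)} ->
  all incr_node (graft_blocks t bl F).
Proof.
move=> /allP incr_t t_le bl_ok.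
have block_ok p :
    all incr_node (block_at bl F p) && all (fun x => n < x) (labels (block_at bl F p)).
  rewrite /block_at; case: ifP => // _.
  case: (ltnP (index p F) (size bl)) => [lt_p|ge_p]; first exact/bl_ok/mem_nth.
  by rewrite nth_default.
rewrite graft_blocksE /graft all_cat; apply/andP; split; last by case/andP: (block_ok (degree t)).
apply/allP => _ /mapP[c ct ->]; apply: incr_graft_node (incr_t c ct) => l lc.
have /andP[-> /allP gt_n] := block_ok (index l (labels t)); rewrite andbT.
have lt : l \in labels t by apply/labelsP; exists c.
by apply/allP => d /label_in_labels /gt_n; apply: leq_ltn_trans (t_le l lt).
Qed.

Lemma star_trees_increasing t w r : is_increasing t -> is_increasing w ->
  r \in star_trees t w -> is_increasing r.
Proof.
move=> /andP[nt incr_t] /andP[nw incr_w].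
set n := degree t; set u := shift n w.
have nu : perm_eq (labels u) (iota n.+1 (degree w)).
  by rewrite labels_shift -addn1 iotaDl perm_map.
have ut : uniq (labels t) by rewrite (perm_uniq nt) iota_uniq.
have t_le : {in labels t, forall l, l <= n} by move=> l; rewrite (perm_mem nt) mem_iota; lia.
have u_gt : {in labels u, forall x, n < x} by move=> x; rewrite (perm_mem nu) mem_iota; lia.
rewrite /star_trees /grafts -/n -/u; case: eqP => _.
  by rewrite mem_seq1 => /eqP->; apply/andP.
move=> /flattenP[_ /mapP[C C_sub ->]] /mapP[F F_sub ->].
have [sub_F size_F] := mem_ksub F_sub.
have size_bl : size (blocks u C) = size F by rewrite size_blocks.
have lr : perm_eq (labels (graft_blocks t (blocks u C) F)) (labels t ++ labels u).
  apply: perm_trans (perm_labels_graft_blocks ut sub_F size_bl) _.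
  by rewrite perm_cat2l perm_flatten_blocks ?mem_subsets.
apply/andP; split.
  rewrite /is_ntree /degree (perm_size lr) size_cat (perm_size nu) size_iota iotaD.
  by apply: perm_trans lr _; rewrite perm_cat // add1n.
apply: incr_graft_blocks incr_t t_le _ => b b_bl.
rewrite (incr_blocks (incr_shift n incr_w) b_bl) /=.
by apply/allP => x /(labels_blocks_sub b_bl) /u_gt.
Qed.

Section Coefficients.
Import GRing.Theory.
Local Open Scope ring_scope.
Variable K : fieldType.

Lemma coef_cons (T : eqType) (a : K * T) (x : fsum K T) t :
  coef (a :: x) t = (if a.2 == t then a.1 else 0) + coef x t.
Proof. by rewrite /coef big_cons; case: ifP; rewrite ?add0r. Qed.

Lemma sum_coef (T : eqType) (x : fsum K T) (h : T -> K) (r : seq T) :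
  uniq r -> {in x, forall a, a.2 \in r} ->
  \sum_(a <- x) a.1 * h a.2 = \sum_(t <- r) coef x t * h t.
Proof.
elim: x => [|a x IH] ur x_r.
  by rewrite big_nil big1 // => t _; rewrite /coef big_nil mul0r.
rewrite big_cons IH => [|//|b bx]; last by rewrite x_r // in_cons bx orbT.
under [RHS]eq_bigr => t _ do rewrite coef_cons mulrDl.
rewrite big_split /=; congr (_ + _).
rewrite (bigD1_seq a.2) ?x_r ?mem_head //= eqxx big1 ?addr0 // => t ne_t.
by rewrite eq_sym (negPf ne_t) mul0r.
Qed.

Lemma sum_coef_neq0 (T : eqType) (x : fsum K T) (h : T -> K) :
  \sum_(a <- x) a.1 * h a.2 != 0 -> exists2 t, coef x t != 0 & h t != 0.
Proof.
have x_r : {in x, forall a, a.2 \in undup (map snd x)}.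
  by move=> a ax; rewrite mem_undup map_f.
rewrite (sum_coef _ (undup_uniq _) x_r) => sum_neq0.
have /hasP[t _] : has (fun t => coef x t * h t != 0) (undup (map snd x)).
  apply: contraNT sum_neq0 => /hasPn all0; apply/eqP/big1_seq => t /andP[_ /all0].
  by rewrite negbK => /eqP.
by rewrite mulf_eq0 negb_or => /andP[]; exists t.
Qed.

Lemma sum_count_mem (T : eqType) (L : seq T) (s : T) (c : K) :
  \sum_(q <- L) (if q == s then c else 0) = c * (count_mem s L)%:R.
Proof.
elim: L => [|q L IH]; first by rewrite big_nil mulr0.
by rewrite big_cons IH /= natrD mulrDr eq_sym; case: (s == q); rewrite ?mulr1 ?mulr0.
Qed.

Lemma natr_count_mem_neq0 (T : eqType) (L : seq T) (s : T) :
  (count_mem s L)%:R != 0 :> K -> s \in L.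
Proof. by apply: contraR => /count_memPn cnt0; rewrite cnt0. Qed.

Lemma coef_star (x y : fsum K ptree) s : coef (star x y) s =
  \sum_(a <- x) a.1 * \sum_(b <- y) b.1 * (count_mem s (star_trees a.2 b.2))%:R.
Proof.
rewrite /coef /star big_flatten big_flatten big_map.
apply: eq_bigr => a _; rewrite big_map big_distrr /=; apply: eq_bigr => b _.
by rewrite big_map big_mkcond /= sum_count_mem mulrA.
Qed.

Lemma coef_coprod (x : fsum K ptree) p :
  coef (coprod x) p = \sum_(a <- x) a.1 * (count_mem p (coprod_tree a.2))%:R.
Proof.
rewrite /coef /coprod big_flatten big_map.
by apply: eq_bigr => a _; rewrite big_map big_mkcond /= sum_count_mem.
Qed.

Lemma inKI_unit : inKI (unit_elt K).
Proof.
by move=> t; rewrite /coef big_cons big_nil /=; case: ifP => [/eqP <- //|_]; rewrite eqxx.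
Qed.

Lemma inKI_star (x y : fsum K ptree) : inKI x -> inKI y -> inKI (star x y).
Proof.
move=> x_incr y_incr s; rewrite coef_star.
case/(@sum_coef_neq0 _ _ (fun t => \sum_(b <- y) b.1 * (count_mem s (star_trees t b.2))%:R)).
move=> t xt /(@sum_coef_neq0 _ _ (fun w => (count_mem s (star_trees t w))%:R))[w yw s_tw].
exact: star_trees_increasing (x_incr t xt) (y_incr w yw) (natr_count_mem_neq0 s_tw).
Qed.

Lemma inKI2_coprod (x : fsum K ptree) : inKI x -> inKI2 (coprod x).
Proof.
move=> x_incr p; rewrite coef_coprod.
case/(@sum_coef_neq0 _ _ (fun t => (count_mem p (coprod_tree t))%:R)) => t xt p_t.
exact: coprod_tree_increasing (x_incr t xt) (natr_count_mem_neq0 p_t).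
Qed.

End Coefficients.

Theorem proposition4p4 (K : fieldType) :
  inKI (unit_elt K) /\
  (forall x y : fsum K ptree, inKI x -> inKI y -> inKI (star x y)) /\
  (forall x : fsum K ptree, inKI x -> inKI2 (coprod x)).
Proof. by split; [apply: inKI_unit | split; [apply: inKI_star | apply: inKI2_coprod]]. Qed.
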